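(* Let $D$ be an integral domain, $\star$ a semistar operation on $D$, and $n$ a nonnegative integer. The following are equivalent: (1) every $(\star,d_T)$-linked overring $T$ of $D$ has Krull dimension at most $n$; (2) every $\widetilde{\star}$-valuation overring of $D$ has Krull dimension at most $n$.
   Context: $D$ is an integral domain with quotient field $K$; $f(D)$ denotes nonzero finitely generated fractional ideals, $\overline{\mathcal F}(D)$ nonzero $D$-submodules of $K$. A semistar operation $\star$ on $D$ is a map $\overline{\mathcal F}(D)\to\overline{\mathcal F}(D)$ with $(xE)^\star=xE^\star$ ($0\neq x\in K$), $E\subseteq F\Rightarrow E^\star\subseteq F^\star$, $E\subseteq E^\star=(E^\star)^\star$. $E^{\star_f}:=\bigcup\{F^\star:F\in f(D),F\subseteq E\}$. A nonzero ideal $I$ is a quasi-$\star_f$-ideal if $I^{\star_f}\cap D=I$; $\operatorname{QMax}^{\star_f}(D)$ is the set of maximal proper quasi-$\star_f$-ideals. $E^{\widetilde\star}:=\bigcap\{ED_M:M\in\operatorname{QMax}^{\star_f}(D)\}$ ($=K$ if empty). A valuation overring $V$ of $D$ is a $\widetilde\star$-valuation overring if $F^{\widetilde\star}\subseteq FV$ for all $F\in f(D)$. An overring $T$ of $D$ ($D\subseteq T\subseteq K$) is $(\star,d_T)$-linked to $D$ if for every nonzero finitely generated ideal $F$ of $D$ with $F^\star=D^\star$ one has $FT=T$. *)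

(* D is represented as a subring of its quotient field K;
   subsets of K are predicates K -> Prop (equality of sets = Leibniz equality,
   usable via functional/propositional extensionality). *)
From HB Require Import structures.
From mathcomp Require Import all_boot all_order all_algebra.
Set Implicit Arguments. Unset Strict Implicit. Unset Printing Implicit Defensive.
Import GRing.Theory.
Local Open Scope ring_scope.

Section Defs.
Variable K : fieldType.

Definition incl (A B : K -> Prop) := forall x, A x -> B x.

Definition strict_incl (A B : K -> Prop) := incl A B /\ exists x, B x /\ ~ A x.

Definition is_subring (A : K -> Prop) :=
  [/\ A 0, A 1, (forall x y, A x -> A y -> A (x - y))
   & (forall x y, A x -> A y -> A (x * y))].

Definition is_quotient_field_of (D : K -> Prop) :=
  forall x : K, exists a b, [/\ D a, D b, b != 0 & x = a / b].

Definition is_submodule (D E : K -> Prop) :=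
  [/\ E 0, (forall x y, E x -> E y -> E (x + y))
   & (forall d x, D d -> E x -> E (d * x))].

Definition nz_submodule (D E : K -> Prop) :=
  is_submodule D E /\ exists x, E x /\ x != 0.

Definition span (D : K -> Prop) (s : seq K) : K -> Prop :=
  fun x => exists c : nat -> K,
    (forall i, D (c i)) /\ x = \sum_(i < size s) c i * s`_i.

Definition fg_frac (D F : K -> Prop) :=
  nz_submodule D F /\ exists s : seq K, F = span D s.

Definition scale (x : K) (E : K -> Prop) : K -> Prop :=
  fun y => exists e, E e /\ y = x * e.

Definition semistar (D : K -> Prop) (star : (K -> Prop) -> (K -> Prop)) :=
  [/\ (forall E, nz_submodule D E -> nz_submodule D (star E)),
      (forall x E, x != 0 -> nz_submodule D E -> star (scale x E) = scale x (star E)),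
      (forall E F, nz_submodule D E -> nz_submodule D F -> incl E F ->
                   incl (star E) (star F)),
      (forall E, nz_submodule D E -> incl E (star E))
    & (forall E, nz_submodule D E -> star (star E) = star E)].

Definition star_f (D : K -> Prop) (star : (K -> Prop) -> (K -> Prop))
  (E : K -> Prop) : K -> Prop :=
  fun y => exists F, [/\ fg_frac D F, incl F E & star F y].

Definition nz_ideal (D I : K -> Prop) := nz_submodule D I /\ incl I D.

Definition quasi_ideal (D : K -> Prop) (star : (K -> Prop) -> (K -> Prop)) (I : K -> Prop) :=
  nz_ideal D I /\ (forall x, (star_f D star I x /\ D x) <-> I x).

Definition proper_quasi_ideal (D : K -> Prop) (star : (K -> Prop) -> (K -> Prop)) (I : K -> Prop) :=
  quasi_ideal D star I /\ exists x, D x /\ ~ I x.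

Definition QMax (D : K -> Prop) (star : (K -> Prop) -> (K -> Prop)) (M : K -> Prop) :=
  proper_quasi_ideal D star M /\
  (forall J, proper_quasi_ideal D star J -> incl M J -> J = M).

Definition loc (D E M : K -> Prop) : K -> Prop :=
  fun y => exists e s, [/\ E e, D s, ~ M s & y = e / s].

(* E^{tilde star} (= K if QMax is empty) *)
Definition tilde (D : K -> Prop) (star : (K -> Prop) -> (K -> Prop)) (E : K -> Prop) : K -> Prop :=
  fun y => forall M, QMax D star M -> loc D E M y.

Definition prodmod (A B : K -> Prop) : K -> Prop :=
  fun x => exists s : seq (K * K),
    (forall p, p \in s -> A p.1 /\ B p.2) /\ x = \sum_(p <- s) p.1 * p.2.

Definition overring (D T : K -> Prop) := is_subring T /\ incl D T.

Definition valuation_overring (D V : K -> Prop) :=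
  overring D V /\ (forall x : K, x != 0 -> V x \/ V x^-1).

Definition tilde_valuation_overring (D : K -> Prop) (star : (K -> Prop) -> (K -> Prop)) (V : K -> Prop) :=
  valuation_overring D V /\
  (forall F, fg_frac D F -> incl (tilde D star F) (prodmod F V)).

Definition linked_overring (D : K -> Prop) (star : (K -> Prop) -> (K -> Prop)) (T : K -> Prop) :=
  overring D T /\
  (forall F, fg_frac D F -> incl F D -> star F = star D -> prodmod F T = T).

Definition prime_ideal (T P : K -> Prop) :=
  [/\ incl P T, P 0, (forall x y, P x -> P y -> P (x + y)),
      (forall t x, T t -> P x -> P (t * x))
    & ~ P 1 /\ (forall a b, T a -> T b -> P (a * b) -> P a \/ P b)].

Definition krull_dim_le (T : K -> Prop) (n : nat) :=
  ~ exists c : nat -> (K -> Prop),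
      (forall i, (i <= n.+1)%N -> prime_ideal T (c i)) /\
      (forall i, (i <= n)%N -> strict_incl (c i) (c i.+1)).

End Defs.

(* (1) -> (2): a star-tilde-valuation overring V is itself linked.  If F is
   finitely generated with F^star = D^star, then F lies in no
   quasi-star_f-maximal ideal, so 1 is in F^{~star} ⊆ F V and F V = V
   (tilde_valuation_linked).
   (2) -> (1): a chain of n + 2 primes of a linked overring T lifts to a chain
   of primes of a valuation overring W of T (prime_chain_lift), and W is a
   star-tilde-valuation overring (valuation_over_linked_tilde): the centre
   D ∩ m_W of W has a star_f-closure avoiding 1, so by Zorn's lemma it lies in
   a quasi-star_f-maximal ideal M, whence D_M ⊆ W.
   Chain lifting iterates a relative Chevalley extension theorem
   (valuation_extension), obtained from a maximal "admissible" intermediate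
   ring and the classical fact that an ideal in the Jacobson radical of R
   cannot generate the unit ideal in both R[z] and R[z^-1]
   (one_rep_exclusive). *)

From Pilot Require Import Defs.
From HB Require Import structures.
From mathcomp Require Import all_boot all_order all_algebra.
From mathcomp Require Import zify ring boolp classical_sets.
Set Implicit Arguments. Unset Strict Implicit. Unset Printing Implicit Defensive.
Import GRing.Theory.
Local Open Scope ring_scope.
Local Open Scope classical_set_scope.

Section Subring.
Variables (K : fieldType) (A : K -> Prop).
Hypothesis subA : is_subring A.

Lemma subring0 : A 0.  Proof. by case: subA. Qed.
Lemma subring1 : A 1.  Proof. by case: subA. Qed.

Lemma subringB x y : A x -> A y -> A (x - y).
Proof. by case: subA => _ _ + _; apply. Qed.

Lemma subringM x y : A x -> A y -> A (x * y).
Proof. by case: subA => _ _ _; apply. Qed.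

Lemma subringN x : A x -> A (- x).
Proof. by move=> Ax; rewrite -sub0r; apply: subringB => //; exact: subring0. Qed.

Lemma subringD x y : A x -> A y -> A (x + y).
Proof. by move=> Ax Ay; rewrite -[y]opprK; apply: subringB => //; exact: subringN. Qed.

Lemma subringX x n : A x -> A (x ^+ n).
Proof.
move=> Ax; elim: n => [|n IH]; first by rewrite expr0; exact: subring1.
by rewrite exprS; apply: subringM.
Qed.

Lemma subring_sum n (F : 'I_n -> K) : (forall i, A (F i)) -> A (\sum_(i < n) F i).
Proof. by move=> AF; apply: (big_ind A) => //; [exact: subring0 | exact: subringD]. Qed.

Lemma subring_nz_submodule : nz_submodule A A.
Proof.
split; last by exists 1; split; [exact: subring1 | exact: oner_neq0].
by split; [exact: subring0 | exact: subringD | exact: subringM].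
Qed.

End Subring.

Section ProductModule.
Variables (K : fieldType) (X Y : K -> Prop).

Lemma prodmod0 : prodmod X Y 0.
Proof. by exists [::]; split => //; rewrite big_nil. Qed.

Lemma prodmod_gen x y : X x -> Y y -> prodmod X Y (x * y).
Proof.
move=> Xx Yy; exists [:: (x, y)]; split; last by rewrite big_seq1.
by move=> p; rewrite inE => /eqP ->.
Qed.

Lemma prodmodD a b : prodmod X Y a -> prodmod X Y b -> prodmod X Y (a + b).
Proof.
move=> [s [hs ->]] [t [ht ->]]; exists (s ++ t); split; last by rewrite big_cat.
by move=> p; rewrite mem_cat => /orP[]; [apply: hs | apply: ht].
Qed.

Lemma prodmod_mulr a r :
  (forall y, Y y -> Y (y * r)) -> prodmod X Y a -> prodmod X Y (a * r).
Proof.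
move=> Yr [s [hs ->]]; exists [seq (p.1, p.2 * r) | p <- s]; split.
  by move=> p /mapP[q /hs[Xq Yq] ->]; split => //; apply: Yr.
by rewrite big_map mulr_suml; apply: eq_bigr => p _; rewrite mulrA.
Qed.

Lemma prodmod_ind (Z : K -> Prop) a :
  Z 0 -> (forall x y, Z x -> Z y -> Z (x + y)) ->
  (forall x y, X x -> Y y -> Z (x * y)) -> prodmod X Y a -> Z a.
Proof.
move=> Z0 ZD ZM [s [hs ->]]; elim: s hs => [|p s IH] hs; first by rewrite big_nil.
rewrite big_cons; apply: ZD; last by apply: IH => q hq; apply: hs; rewrite inE hq orbT.
by case: (hs p (mem_head _ _)); apply: ZM.
Qed.

End ProductModule.

Lemma prodmod_mono (K : fieldType) (X Y X' Y' : K -> Prop) a :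
  incl X X' -> incl Y Y' -> prodmod X Y a -> prodmod X' Y' a.
Proof. by move=> XX' YY' [s [hs ->]]; exists s; split => // p /hs[]; split; auto. Qed.

Lemma prodmod_one (K : fieldType) (F S : K -> Prop) :
  is_subring S -> incl F S -> prodmod F S 1 -> prodmod F S = S.
Proof.
move=> subS FS FS1; apply/predeqP => x; split.
  apply: prodmod_ind; [exact: subring0 | exact: subringD |].
  by move=> a b /FS Sa Sb; apply: subringM.
by move=> Sx; rewrite -[x]mul1r; apply: prodmod_mulr FS1 => y Sy; apply: subringM.
Qed.

Definition is_valuation_ring (K : fieldType) (V : K -> Prop) :=
  is_subring V /\ forall x : K, x != 0 -> V x \/ V x^-1.

Definition vmax (K : fieldType) (V : K -> Prop) (x : K) := V x /\ (x = 0 \/ ~ V x^-1).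

(* The non-units of V form an ideal of V; closure under multiplication only
   needs V to be a subring, closure under addition uses the valuation
   property. *)
Section ValuationRing.
Variables (K : fieldType) (V : K -> Prop).

Section Basics.
Hypothesis subV : is_subring V.

Lemma vmax0 : vmax V 0.
Proof. by split; [exact: subring0 | left]. Qed.

Lemma vmax_neq1 : ~ vmax V 1.
Proof. by move=> [_ [/eqP|]]; [rewrite oner_eq0 | rewrite invr1; apply; exact: subring1]. Qed.

Lemma vmaxM a b : V a -> vmax V b -> vmax V (a * b).
Proof.
move=> Va [Vb Nb]; split; first exact: subringM.
have [->|ab0] := eqVneq (a * b) 0; [by left | right].
move: ab0; rewrite mulf_eq0 negb_or => /andP[a0 b0] Vab'.
case: Nb => [/eqP|]; first by rewrite (negbTE b0).
apply; have -> : b^-1 = a * (a * b)^-1 by rewrite invfM mulrA mulfV // mul1r.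
exact: subringM.
Qed.

Lemma vmaxMr a b : vmax V a -> V b -> vmax V (a * b).
Proof. by move=> ma Vb; rewrite mulrC; apply: vmaxM. Qed.

Lemma vmaxN a : vmax V a -> vmax V (- a).
Proof.
by move=> ma; rewrite -mulN1r; apply: vmaxM => //; apply: (subringN subV); exact: subring1.
Qed.

Lemma vmax_unit x : V x -> ~ vmax V x -> x != 0 /\ V x^-1.
Proof.
move=> Vx Nx; split; first by apply/eqP => x0; apply: Nx; split => //; left.
by apply: contrapT => Vx'; apply: Nx; split => //; right.
Qed.

Lemma vmax_mul_prime a b : V a -> V b -> vmax V (a * b) -> vmax V a \/ vmax V b.
Proof.
move=> Va Vb [_ Nab]; apply: contrapT => /not_orP[Na Nb].
have [a0 Va'] := vmax_unit Va Na; have [b0 Vb'] := vmax_unit Vb Nb.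
case: Nab => [/eqP|]; first by rewrite mulf_eq0 (negbTE a0) (negbTE b0).
by apply; rewrite invfM; apply: subringM.
Qed.

End Basics.

Hypothesis valV : is_valuation_ring V.

Lemma vmaxB a b : vmax V a -> vmax V b -> vmax V (a - b).
Proof.
have [subV Vinv] := valV; move=> ma mb.
have [->|a0] := eqVneq a 0; first by rewrite sub0r; apply: vmaxN.
have [->|b0] := eqVneq b 0; first by rewrite subr0.
have [Vab|] := Vinv (a / b) (mulf_neq0 a0 (invr_neq0 b0)).
  have -> : a - b = (a / b - 1) * b by rewrite mulrBl mulfVK // mul1r.
  by apply: vmaxM => //; apply: subringB => //; exact: subring1.
rewrite invfM invrK => Vba.
have -> : a - b = a * (1 - b / a) by rewrite mulrBr mulr1 mulrCA mulfV // mulr1.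
by apply: vmaxMr => //; apply: subringB => //; [exact: subring1 | rewrite mulrC].
Qed.

Lemma vmaxD a b : vmax V a -> vmax V b -> vmax V (a + b).
Proof. by move=> ma mb; rewrite -[b]opprK; apply: vmaxB => //; apply: vmaxN => //; case: valV. Qed.

Lemma vmax_prime_ideal : prime_ideal V (vmax V).
Proof.
have subV := valV.1; split.
- by move=> x [].
- exact: vmax0.
- exact: vmaxD.
- by move=> t x; apply: vmaxM.
- by split; [exact: vmax_neq1 | exact: vmax_mul_prime].
Qed.

Lemma vmax_inv x : ~ V x -> vmax V x^-1.
Proof.
have [subV Vinv] := valV; move=> Nx.
have x0 : x != 0 by apply/eqP => x0; apply: Nx; rewrite x0; exact: subring0.
by case: (Vinv _ x0) => // Vx'; split => //; right; rewrite invrK.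
Qed.

End ValuationRing.

Lemma zorn_nonempty (T : Type) (F : set (set T)) :
  (exists X, F X) ->
  (forall C, (exists X, C X) -> C `<=` F -> total_on C subset ->
     F (\bigcup_(X in C) X)) ->
  exists M, F M /\ forall X, F X -> M `<=` X -> X `<=` M.
Proof.
move=> [X0 FX0] Fchain.
pose F0 X := F X \/ X = set0.
have F0chain C : C `<=` F0 -> total_on C subset -> F0 (\bigcup_(X in C) X).
  move=> CF0 totC; have [[X CX FX]|noF] := pselect (exists2 X, C X & F X).
    left; have -> : \bigcup_(Y in C) Y = \bigcup_(Y in C `&` F) Y.
      apply/seteqP; split => [x [Y CY Yx]|x [Y [CY _] Yx]]; last by exists Y.
      by case: (CF0 _ CY) => [FY|Y0]; [exists Y | move: Yx; rewrite Y0].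
    apply: Fchain; [by exists X | by move=> Y [] |].
    by move=> Y Z [CY _] [CZ _]; apply: totC.
  right; apply/seteqP; split => // x [Y CY Yx].
  by case: (CF0 _ CY) => [FY|Y0]; [case: noF; exists Y | move: Yx; rewrite Y0].
have [M [F0M maxM]] := Zorn_bigcup F0chain.
have FM : F M.
  case: F0M => // M0; case: (pselect (X0 `<=` M)) => [X0M|NX0M].
    by have -> : M = X0 by apply/seteqP; split => // x; rewrite M0.
  by case: (maxM X0); [split => //; rewrite M0 | left].
exists M; split => // X FX MX x Xx; apply: contrapT => NMx.
by apply: (maxM X); [split => // XM; apply: NMx; apply: XM | left].
Qed.

Definition coef_in (K : fieldType) (R : K -> Prop) (p : {poly K}) := forall i, R p`_i.

Definition adjoin (K : fieldType) (R : K -> Prop) (z : K) : K -> Prop :=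
  fun x => exists p, coef_in R p /\ x = p.[z].

Section Adjoin.
Variables (K : fieldType) (R : K -> Prop) (z : K).
Hypothesis subR : is_subring R.

Lemma adjoin_subring : is_subring (adjoin R z).
Proof.
split.
- exists 0; split; last by rewrite horner0.
  by move=> i; rewrite coef0; exact: subring0.
- exists 1; split; last by rewrite hornerC.
  by move=> i; rewrite coef1; case: (i == 0%N); [exact: subring1 | exact: subring0].
- move=> _ _ [p [Rp ->]] [q [Rq ->]]; exists (p - q); split; last by rewrite hornerD hornerN.
  by move=> i; rewrite coefB; apply: subringB.
- move=> _ _ [p [Rp ->]] [q [Rq ->]]; exists (p * q); split; last by rewrite hornerM.
  by move=> i; rewrite coefM; apply: subring_sum => // j; apply: subringM.
Qed.

Lemma adjoin_base : incl R (adjoin R z).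
Proof.
move=> x Rx; exists x%:P; split; last by rewrite hornerC.
by move=> i; rewrite coefC; case: (i == 0%N) => //; exact: subring0.
Qed.

Lemma adjoin_elt : adjoin R z z.
Proof.
exists 'X; split; last by rewrite hornerX.
by move=> i; rewrite coefX; case: (i == 1%N); [exact: subring1 | exact: subring0].
Qed.

Lemma adjoin_min (S : K -> Prop) : is_subring S -> incl R S -> S z -> incl (adjoin R z) S.
Proof.
move=> subS RS Sz _ [p [Rp ->]]; rewrite horner_coef; apply: subring_sum => // i.
by apply: subringM => //; [exact: RS | exact: subringX].
Qed.

End Adjoin.

Lemma prodmod_adjoin (K : fieldType) (N R : K -> Prop) z a :
  prodmod N (adjoin R z) a -> exists Q, coef_in (prodmod N R) Q /\ a = Q.[z].
Proof.
move=> [s [hs ->]]; elim: s hs => [|p s IH] hs.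
  exists 0; split; last by rewrite big_nil horner0.
  by move=> i; rewrite coef0; exact: prodmod0.
rewrite big_cons.
have [Q [NRQ ->]] : exists Q, coef_in (prodmod N R) Q /\ \sum_(q <- s) q.1 * q.2 = Q.[z].
  by apply: IH => q hq; apply: hs; rewrite inE hq orbT.
case: (hs p (mem_head _ _)) => Np1 [r [Rr ->]].
exists (p.1 *: r + Q); split; last by rewrite hornerD hornerZ.
by move=> i; rewrite coefD coefZ; apply: prodmodD => //; exact: prodmod_gen.
Qed.

Lemma homogenize (K : fieldType) (R Z : K -> Prop) (Q : {poly K}) u d :
  is_subring R -> Z 0 -> (forall x y, Z x -> Z y -> Z (x + y)) ->
  (forall x r, Z x -> R r -> Z (x * r)) -> R u -> u != 0 ->
  coef_in Z Q -> (size Q <= d)%N -> Z (Q.[u^-1] * u ^+ d).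
Proof.
move=> subR Z0 ZD ZR Ru u0 ZQ sQ.
rewrite (horner_coef_wide _ sQ) mulr_suml; apply: (big_ind Z) => // i _.
have id : (i <= d)%N by apply: ltnW.
have -> : Q`_i * u^-1 ^+ i * u ^+ d = Q`_i * u ^+ (d - i).
  rewrite -mulrA; congr (_ * _).
  by rewrite -{2}(subnK id) exprD exprVn mulrCA mulVf ?mulr1 // expf_neq0.
by apply: ZR => //; exact: subringX.
Qed.

Lemma prime_ideal_pow (K : fieldType) (A P : K -> Prop) a n :
  is_subring A -> prime_ideal A P -> A a -> P (a ^+ n) -> P a.
Proof.
move=> subA [_ _ _ _ [P1 Pmul]] Aa; elim: n => [|n IH]; first by rewrite expr0.
by rewrite exprS => /Pmul[] //; exact: subringX.
Qed.

Definition ideal_of (K : fieldType) (R Z : K -> Prop) :=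
  [/\ Z 0, (forall x y, Z x -> Z y -> Z (x - y)) & (forall x r, Z x -> R r -> Z (x * r))].

Definition jacobson_ideal (K : fieldType) (R Z : K -> Prop) :=
  [/\ is_subring R, incl Z R, ideal_of R Z & (forall b, Z b -> 1 - b != 0 /\ R (1 - b)^-1)].

(* z satisfies Q.[z] = 1 for a polynomial Q of size at most k with
   coefficients in Z, i.e. 1 lies in the ideal generated by Z in R[z]. *)
Definition one_rep (K : fieldType) (Z : K -> Prop) (z : K) (k : nat) :=
  exists Q : {poly K}, [/\ (size Q <= k)%N, coef_in Z Q & Q.[z] = 1].

Lemma one_rep0 (K : fieldType) (Z : K -> Prop) z : ~ one_rep Z z 0.
Proof.
move=> [Q [/size_poly_leq0P -> _]]; rewrite horner0 => /eqP.
by rewrite eq_sym oner_eq0.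
Qed.

(* The classical lemma behind the existence of valuation rings: an ideal Z in
   the Jacobson radical of R cannot generate the unit ideal both in R[z] and
   in R[z^-1].  The proof is an induction on the total degree of the two
   relations, lowering the larger one with the help of the other. *)
Section JacobsonRelations.
Variables (K : fieldType) (R Z : K -> Prop).
Hypothesis jacZ : jacobson_ideal R Z.

(* From Q.[z^-1] = 1 with size Q <= l.+1: the reversed polynomial
   G = X^l - \sum_i Q_i X^(l - i) vanishes at z, has coefficients in R, and
   leading coefficient 1 - Q_0 (a unit of R). *)
Lemma reversed_relation z l (Q : {poly K}) :
  z != 0 -> (size Q <= l.+1)%N -> coef_in Z Q -> Q.[z^-1] = 1 ->
  exists G, [/\ coef_in R G, G.[z] = 0, G`_l = 1 - Q`_0 & (size G <= l.+1)%N].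
Proof.
have [subR ZR _ _] := jacZ; move=> z0 sQ ZQ Qz.
pose G : {poly K} := 'X^l - \sum_(i < l.+1) Q`_i *: 'X^(l - i).
exists G; split.
- move=> j; rewrite /G coefB coefXn coef_sum; apply: subringB => //.
    by case: (j == l); [exact: subring1 | exact: subring0].
  apply: subring_sum => // i; rewrite coefZ coefXn; apply: subringM => //; first exact: ZR.
  by case: (j == _); [exact: subring1 | exact: subring0].
- rewrite /G hornerD hornerN horner_sum hornerXn.
  have -> : \sum_(i < l.+1) (Q`_i *: 'X^(l - i)).[z] = z ^+ l * Q.[z^-1].
    rewrite (horner_coef_wide _ sQ) mulr_sumr; apply: eq_bigr => i _.
    rewrite hornerZ hornerXn mulrCA; congr (_ * _).
    have : (i <= l)%N by rewrite -ltnS.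
    move: (nat_of_ord i) => m ml.
    by rewrite exprVn -{2}(subnK ml) exprD mulrK // unitfE expf_neq0.
  by rewrite Qz mulr1 subrr.
- rewrite /G coefB coefXn eqxx coef_sum big_ord_recl /= coefZ coefXn subn0 eqxx mulr1.
  rewrite big1 ?addr0 // => i _; rewrite coefZ coefXn /=.
  have -> : (l == (l - bump 0 i)%N) = false by have := ltn_ord i; rewrite /bump /=; lia.
  by rewrite mulr0.
- apply/leq_sizeP => j lj; rewrite /G coefB coefXn coef_sum.
  have -> : (j == l) = false by lia.
  rewrite big1 ?subr0 // => i _; rewrite coefZ coefXn.
  have -> : (j == (l - i)%N) = false by lia.
  by rewrite mulr0.
Qed.

Lemma one_rep_lower z k l :
  z != 0 -> one_rep Z z k.+1 -> one_rep Z z^-1 l.+1 -> (l <= k)%N -> one_rep Z z k.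
Proof.
have [subR ZR [Z0 ZB ZM] Zunit] := jacZ.
move=> z0 [Q1 [s1 ZQ1 Q1z]] [Q2 [s2 ZQ2 Q2z]] lk.
have [G [RG Gz Gl sG]] := reversed_relation z0 s2 ZQ2 Q2z.
have [u0 Ru] := Zunit _ (ZQ2 0%N).
pose c := Q1`_k * (1 - Q2`_0)^-1.
have Zc : Z c by apply: ZM; [exact: ZQ1 | exact: Ru].
exists (Q1 - c *: ('X^(k - l) * G)); split.
- apply/leq_sizeP => j kj; rewrite coefB coefZ coefXnM.
  have -> : (j < k - l)%N = false by apply/negbTE; lia.
  move: kj; rewrite leq_eqVlt => /orP[/eqP <-|kj].
    by rewrite subKn // Gl /c mulrVK ?unitfE // subrr.
  have -> : Q1`_j = 0 by move/leq_sizeP: s1; apply.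
  by move/leq_sizeP: sG => ->; rewrite ?mulr0 ?subr0 //; lia.
- move=> i; rewrite coefB coefZ; apply: ZB; first exact: ZQ1.
  apply: ZM => //; rewrite coefXnM; case: ifP => _; [exact: subring0 | exact: RG].
- by rewrite hornerD hornerN hornerZ hornerM Gz !mulr0 subr0.
Qed.

Lemma one_rep_exclusive z k l : z != 0 -> one_rep Z z k -> ~ one_rep Z z^-1 l.
Proof.
move: {2}(k + l)%N (leqnn (k + l)) => n; elim: n z k l => [|n IH] z k l.
  by rewrite leqn0 addn_eq0 => /andP[/eqP -> _] _ /one_rep0.
case: k => [|k]; first by move=> _ _ /one_rep0.
case: l => [|l]; first by move=> _ _ _ /one_rep0.
move=> kln z0 zk zl; have [lk|kl] := leqP l k.
  by apply: (IH z k l.+1 _ z0 _ zl); [lia | exact: one_rep_lower z0 zk zl lk].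
have zi0 : z^-1 != 0 by rewrite invr_eq0.
have zk' : one_rep Z (z^-1)^-1 k.+1 by rewrite invrK.
by apply: (IH z^-1 l k.+1 _ zi0 _ zk'); [lia | exact: one_rep_lower zi0 zl zk' (ltnW kl)].
Qed.

End JacobsonRelations.

Lemma prodmod_bigcup (K : fieldType) (Y : K -> Prop) (C : set (set K)) a :
  (exists X, C X) -> total_on C subset ->
  prodmod Y (\bigcup_(X in C) X) a -> exists2 X, C X & prodmod Y X a.
Proof.
move=> [X0 CX0] totC [s [hs ->]]; elim: s hs => [|p s IH] hs.
  by exists X0 => //; rewrite big_nil; exact: prodmod0.
rewrite big_cons.
have [X CX Xs] : exists2 X, C X & prodmod Y X (\sum_(q <- s) q.1 * q.2).
  by apply: IH => q hq; apply: hs; rewrite inE hq orbT.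
case: (hs p (mem_head _ _)) => Yp1 [X1 CX1 X1p2].
case: (totC _ _ CX CX1) => XX1.
  by exists X1 => //; apply: prodmodD; [exact: prodmod_gen | exact: prodmod_mono Xs].
by exists X => //; apply: prodmodD => //; apply: prodmod_gen => //; exact: XX1.
Qed.

Definition extension_data (K : fieldType) (V A P : K -> Prop) :=
  [/\ is_valuation_ring V, is_subring A, incl A V, prime_ideal A P
    & forall a, A a -> vmax V a -> P a].

Definition ext_gens (K : fieldType) (P V : K -> Prop) (x : K) := P x \/ vmax V x.

Definition admissible (K : fieldType) (V A P R : K -> Prop) :=
  [/\ is_subring R, incl A R, incl (vmax V) R, incl R V
    & forall a, A a -> prodmod (ext_gens P V) R a -> P a].

Definition maximal_admissible (K : fieldType) (V A P R : K -> Prop) :=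
  admissible V A P R /\ forall X, admissible V A P X -> incl R X -> incl X R.

Section Extension.
Variables (K : fieldType) (V A P : K -> Prop).
Hypothesis data : extension_data V A P.

Local Notation J R := (prodmod (ext_gens P V) R).

Section Admissible.
Variable R : K -> Prop.
Hypothesis admR : admissible V A P R.

Lemma admissible_ideal_sub : incl (J R) R.
Proof.
have [_ _ _ [PA _ _ _ _] _] := data; have [subR AR mR _ _] := admR.
move=> x; apply: prodmod_ind; [exact: subring0 | exact: subringD |].
by move=> a b [/PA/AR|/mR] Ra Rb; apply: subringM.
Qed.

Lemma admissible_idealM a r : J R a -> R r -> J R (a * r).
Proof.
have [subR _ _ _ _] := admR; move=> Ja Rr.
by apply: prodmod_mulr Ja => y Ry; exact: subringM.
Qed.

Lemma admissible_idealB a b : J R a -> J R b -> J R (a - b).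
Proof.
have [subR _ _ _ _] := admR; move=> Ja Jb; apply: prodmodD => //.
by rewrite -mulrN1; apply: admissible_idealM => //; apply: (subringN subR); exact: subring1.
Qed.

Lemma admissible_gen a : ext_gens P V a -> J R a.
Proof.
have [subR _ _ _ _] := admR; move=> ga; rewrite -[a]mulr1.
by apply: prodmod_gen => //; exact: subring1.
Qed.

Lemma admissible_ideal : ideal_of R (J R).
Proof. by split; [exact: prodmod0 | exact: admissible_idealB | exact: admissible_idealM]. Qed.

Lemma admissible_pow_sub1 b n : J R b -> J R ((1 - b) ^+ n - 1).
Proof.
have [subR _ _ _ _] := admR; move=> Jb; have Rb := admissible_ideal_sub Jb.
elim: n => [|n IH]; first by rewrite expr0 subrr; exact: prodmod0.
have -> : (1 - b) ^+ n.+1 - 1 = ((1 - b) ^+ n - 1) * (1 - b) - b.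
  by rewrite exprSr; ring.
apply: admissible_idealB => //; apply: admissible_idealM => //.
by apply: (subringB subR) => //; exact: subring1.
Qed.

Lemma admissible_adjoin z : V z ->
  (forall Q, coef_in (J R) Q -> A Q.[z] -> P Q.[z]) -> admissible V A P (adjoin R z).
Proof.
have [subR AR mR RV _] := admR; have [[subV _] _ _ _ _] := data; move=> Vz relP; split.
- exact: adjoin_subring.
- by move=> x /AR; apply: adjoin_base.
- by move=> x /mR; apply: adjoin_base.
- exact: adjoin_min.
- by move=> a Aa /prodmod_adjoin[Q [JQ Qa]]; rewrite Qa in Aa *; apply: relP.
Qed.

End Admissible.

Section Maximal.
Variable M : K -> Prop.
Hypothesis maxM : maximal_admissible V A P M.

Let admM : admissible V A P M := maxM.1.

Lemma maximal_adjoin z : V z ->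
  (forall Q, coef_in (J M) Q -> A Q.[z] -> P Q.[z]) -> M z.
Proof.
have [subM _ _ _ _] := admM; move=> Vz relP.
apply: (maxM.2 _ (admissible_adjoin admM Vz relP)); last exact: adjoin_elt.
exact: adjoin_base.
Qed.

Lemma maximal_inv_A a : A a -> ~ P a -> a != 0 /\ M a^-1.
Proof.
have [_ subA AV PA AmP] := data; have [subM AM _ _ JP] := admM.
move=> Aa NPa; have [a0 Va'] := vmax_unit (AV a Aa) (fun ma => NPa (AmP a Aa ma)).
split => //; apply: maximal_adjoin => // Q JQ AQ; apply: contrapT => NPQ.
have Jq : J M (Q.[a^-1] * a ^+ size Q).
  apply: (homogenize subM (prodmod0 _ _) (@prodmodD _ _ _)) => //; last exact: AM.
  exact: (admissible_idealM admM).
have [_ _ _ _ [_ Pmul]] := PA.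
have Aq : A (a ^+ size Q) by exact: subringX.
case: (Pmul _ _ AQ Aq (JP _ (subringM subA AQ Aq) Jq)) => // /(prime_ideal_pow subA PA Aa).
exact: NPa.
Qed.

Lemma maximal_inv_1_sub b : J M b -> 1 - b != 0 /\ M (1 - b)^-1.
Proof.
have [_ subA _ PA _] := data; have [subM AM mM MV JP] := admM.
move=> Jb; have Mb := admissible_ideal_sub admM Jb.
have Mu : M (1 - b) by apply: (subringB subM) => //; exact: subring1.
have P1 : ~ P 1 by case: PA => _ _ _ _ [].
have [u0 Vu'] : 1 - b != 0 /\ V (1 - b)^-1.
  apply: vmax_unit; first exact: MV.
  move=> mu; apply: P1; apply: (JP _ (subring1 subA)).
  by rewrite -(subrK b 1); apply: prodmodD => //; apply: (admissible_gen admM); right.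
split => //; apply: maximal_adjoin => // Q JQ AQ.
set c := Q.[(1 - b)^-1]; set w := (1 - b) ^+ size Q.
have Jcw : J M (c * w).
  apply: (homogenize subM (prodmod0 _ _) (@prodmodD _ _ _)) => //.
  exact: (admissible_idealM admM).
have Jwc : J M ((w - 1) * c).
  by apply: (admissible_idealM admM); [exact: (admissible_pow_sub1 admM) | exact: AM].
have Jc : J M c by rewrite (_ : c = c * w - (w - 1) * c); [exact: admissible_idealB | ring].
exact: JP AQ Jc.
Qed.

Lemma maximal_jacobson : jacobson_ideal M (J M).
Proof.
have [subM _ _ _ _] := admM.
split => //; first exact: admissible_ideal_sub.
  exact: admissible_ideal.
exact: maximal_inv_1_sub.
Qed.

Lemma maximal_one_rep z : V z -> ~ M z -> exists k, one_rep (J M) z k.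
Proof.
move=> Vz NMz; have /existsNP[Q] : ~ forall Q, coef_in (J M) Q -> A Q.[z] -> P Q.[z].
  by move=> relP; apply: NMz; exact: maximal_adjoin.
move=> /not_implyP[JQ /not_implyP[AQ NPQ]]; have [q0 Mq'] := maximal_inv_A AQ NPQ.
exists (size (Q.[z]^-1 *: Q)), (Q.[z]^-1 *: Q); split => //; last by rewrite hornerZ mulVf.
by move=> i; rewrite coefZ mulrC; apply: (admissible_idealM admM).
Qed.

(* If neither x nor x^-1 were in M, both would satisfy relations with
   coefficients in J M, contradicting one_rep_exclusive. *)
Lemma maximal_valuation : is_valuation_ring M.
Proof.
have [valV _ _ _ _] := data; have [subM _ mM _ _] := admM.
split => // x x0; apply: contrapT => /not_orP[NMx NMx'].
have Vx : V x by apply: contrapT => /(vmax_inv valV) /mM.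
have Vx' : V x^-1 by apply: contrapT => Nx'; apply: NMx; apply: mM; split => //; right.
have [k xk] := maximal_one_rep Vx NMx; have [l xl] := maximal_one_rep Vx' NMx'.
exact: (one_rep_exclusive maximal_jacobson x0 xk xl).
Qed.

Lemma maximal_centre a : A a -> (vmax M a <-> P a).
Proof.
have [_ subA _ PA _] := data; have [_ AM _ _ JP] := admM; move=> Aa; split.
  move=> [_ ma]; apply: contrapT => NPa; have [a0 Ma'] := maximal_inv_A Aa NPa.
  by case: ma => [/eqP|]; [rewrite (negbTE a0) | apply].
move=> Pa; split; first exact: AM.
have [->|a0] := eqVneq a 0; [by left | right] => Ma'.
have : J M (a * a^-1).
  by apply: (admissible_idealM admM) => //; apply: (admissible_gen admM); left.
by rewrite mulfV // => /(JP _ (subring1 subA)); case: PA => _ _ _ _ [].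
Qed.

End Maximal.

Let sumset (X Y : K -> Prop) (x : K) := exists a m, [/\ X a, Y m & x = a + m].

Lemma sumset_subring : is_subring (sumset A (vmax V)).
Proof.
have [valV subA AV _ _] := data; have subV := valV.1.
have mV m : vmax V m -> V m by case.
split.
- by exists 0, 0; split; [exact: subring0 | exact: vmax0 | rewrite addr0].
- by exists 1, 0; split; [exact: subring1 | exact: vmax0 | rewrite addr0].
- move=> _ _ [a [m [Aa ma ->]]] [b [m' [Ab mb ->]]]; exists (a - b), (m - m'); split.
  + exact: subringB. + exact: vmaxB. + by rewrite opprD addrACA.
- move=> _ _ [a [m [Aa ma ->]]] [b [m' [Ab mb ->]]].
  exists (a * b), (a * m' + m * (b + m')); split.
  + exact: subringM.
  + apply: vmaxD => //; first by apply: vmaxM => //; exact: AV.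
    by apply: vmaxMr => //; apply: (subringD subV); [exact: AV | exact: mV].
  + by rewrite mulrDl mulrDr addrA.
Qed.

(* A + m_V is admissible: its extended ideal is P + m_V, which meets A in P. *)
Lemma admissible_base : admissible V A P (sumset A (vmax V)).
Proof.
have [valV subA AV PA AmP] := data; have subV := valV.1.
have [PsubA _ PD PM _] := PA; have mV m : vmax V m -> V m by case.
split.
- exact: sumset_subring.
- by move=> x Ax; exists x, 0; split => //; [exact: vmax0 | rewrite addr0].
- by move=> x mx; exists 0, x; split => //; [exact: subring0 | rewrite add0r].
- by move=> _ [a [m [Aa ma ->]]]; apply: (subringD subV); [exact: AV | exact: mV].
move=> a Aa /(prodmod_ind (Z := sumset P (vmax V))) [].
- by exists 0, 0; split; [case: PA | exact: vmax0 | rewrite addr0].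
- move=> _ _ [p [m [Pp mm ->]]] [q [m' [Pq mm' ->]]]; exists (p + q), (m + m').
  by split; [exact: PD | exact: vmaxD | rewrite addrACA].
- move=> g _ [Pg|mg] [b [m [Ab mm ->]]].
  + exists (b * g), (g * m); split; [exact: PM | | by rewrite mulrDr mulrC].
    by apply: vmaxM => //; apply: AV; exact: PsubA.
  + exists 0, (g * (b + m)); split; [by case: PA | | by rewrite add0r].
    by apply: vmaxMr => //; apply: (subringD subV); [exact: AV | exact: mV].
- move=> p [m [Pp mm ea]]; have Am : A m.
    by rewrite (_ : m = a - p); [apply: subringB => //; exact: PsubA | rewrite ea addrC addKr].
  by rewrite ea; apply: PD => //; exact: AmP.
Qed.

Lemma admissible_bigcup (C : set (set K)) :
  (exists X, C X) -> C `<=` admissible V A P -> total_on C subset ->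
  admissible V A P (\bigcup_(X in C) X).
Proof.
move=> [X0 CX0] admC totC.
have two x y : (\bigcup_(X in C) X) x -> (\bigcup_(X in C) X) y ->
    exists2 X, C X & X x /\ X y.
  move=> [X CX Xx] [Y CY Yy]; case: (totC _ _ CX CY) => XY.
    by exists Y => //; split => //; exact: XY.
  by exists X => //; split => //; exact: XY.
have [subX0 AX0 mX0 _ _] := admC _ CX0; split.
- split.
  + by exists X0 => //; exact: subring0.
  + by exists X0 => //; exact: subring1.
  + move=> x y /two /[apply] -[X CX [Xx Xy]]; exists X => //.
    by have [subX _ _ _ _] := admC _ CX; exact: subringB.
  + move=> x y /two /[apply] -[X CX [Xx Xy]]; exists X => //.
    by have [subX _ _ _ _] := admC _ CX; exact: subringM.
- by move=> x /AX0 Xx; exists X0.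
- by move=> x /mX0 Xx; exists X0.
- by move=> x [X /admC[_ _ _ XV _] /XV].
- move=> a Aa /(prodmod_bigcup (ex_intro _ X0 CX0) totC) [X /admC[_ _ _ _ JP]].
  exact: JP.
Qed.

Lemma maximal_admissible_exists : exists M, maximal_admissible V A P M.
Proof.
have [M [admM maxM]] := zorn_nonempty (ex_intro _ _ admissible_base) admissible_bigcup.
by exists M; split.
Qed.

End Extension.

Theorem valuation_extension (K : fieldType) (V A P : K -> Prop) :
  extension_data V A P ->
  exists W, [/\ is_valuation_ring W, incl A W, incl W V, incl (vmax V) W
              & forall a, A a -> (vmax W a <-> P a)].
Proof.
move=> data; have [M maxM] := maximal_admissible_exists data.
have [[_ AM mM MV _] _] := maxM.
exists M; split => //; [exact: maximal_valuation maxM | exact: maximal_centre maxM].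
Qed.

Lemma prime_ideal_restrict (K : fieldType) (W W' Q : K -> Prop) :
  prime_ideal W Q -> incl W' W -> incl Q W' -> prime_ideal W' Q.
Proof.
move=> [_ Q0 QD QM [Q1 Qmul]] W'W QW'; split => //.
- by move=> t x /W'W; apply: QM.
- by split => // a b /W'W Wa /W'W; apply: Qmul.
Qed.

Lemma vmax_mono (K : fieldType) (W W' : K -> Prop) :
  incl W' W -> incl (vmax W) W' -> incl (vmax W) (vmax W').
Proof.
move=> W'W mW x mx; split; first exact: mW.
by case: mx => _ [->|NWx']; [left | right => /W'W].
Qed.

Section ChainLift.
Variables (K : fieldType) (T : K -> Prop) (c : nat -> K -> Prop) (n : nat).
Hypothesis subT : is_subring T.
Hypothesis primec : forall i, (i <= n.+1)%N -> prime_ideal T (c i).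
Hypothesis chainc : forall i, (i <= n)%N -> strict_incl (c i) (c i.+1).

Definition lifted_chain (k : nat) (W : K -> Prop) (q : nat -> K -> Prop) :=
  [/\ is_valuation_ring W, incl T W, q k = vmax W,
      forall i, (i <= k)%N -> [/\ prime_ideal W (q i), incl (q i) (vmax W)
                                 & forall t, T t -> (q i t <-> c i t)]
    & forall i, (i < k)%N -> incl (q i) (q i.+1)].

(* Base case: extend T inside K with centre c_0. *)
Lemma lifted_chain0 : exists W q, lifted_chain 0 W q.
Proof.
have data : extension_data (fun _ => True) T (c 0%N).
  split => //.
  - by split; [by [] | move=> x _; left].
  - exact: primec.
  - by move=> a _ [_ [->|]] //; case: (primec (leq0n n.+1)).
have [W [valW TW _ _ centreW]] := valuation_extension data.
exists W, (fun _ => vmax W); split => // i; rewrite leqn0 => /eqP ->.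
by split => //; exact: vmax_prime_ideal.
Qed.

(* Step: extend T inside W with centre c_(k+1) ⊇ c_k = T ∩ m_W; the maximal
   ideal of the new ring W' ⊆ W contains m_W, which gives the next link. *)
Lemma lifted_chainS k W q : (k <= n)%N -> lifted_chain k W q ->
  exists W' q', lifted_chain k.+1 W' q'.
Proof.
move=> kn [valW TW qk liftq incq].
have [_ _ traceqk] := liftq k (leqnn k).
have data : extension_data W T (c k.+1).
  split => //; first exact: primec.
  move=> a Ta; rewrite -qk => /(traceqk a Ta).
  by case: (chainc kn) => + _; apply.
have [W' [valW' TW' W'W mW centreW']] := valuation_extension data.
have mm := vmax_mono W'W mW.
exists W', (fun i => if i == k.+1 then vmax W' else q i); split => //=.
- by rewrite eqxx.
- move=> i; rewrite leq_eqVlt => /orP[/eqP ->|ik]; rewrite ?eqxx.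
    by split => //; exact: vmax_prime_ideal.
  have [primeqi mqi traceqi] := liftq i ik; rewrite (ltn_eqF ik).
  split => // [|x /mqi /mm //].
  by apply: prime_ideal_restrict primeqi W'W _ => x /mqi /mW.
- move=> i ik; rewrite (ltn_eqF ik); case: eqVneq => [[->]|ik1].
    by rewrite qk.
  by apply: incq; lia.
Qed.

Lemma prime_chain_lift : exists W, [/\ is_valuation_ring W, incl T W & ~ krull_dim_le W n].
Proof.
have [W [q liftWq]] : exists W q, lifted_chain n.+1 W q.
  suff: forall k, (k <= n.+1)%N -> exists W q, lifted_chain k W q by apply.
  elim=> [|k IH] kn; first exact: lifted_chain0.
  by have [W [q /(lifted_chainS kn)]] := IH (ltnW kn).
have [valW TW _ liftq incq] := liftWq.
exists W; split => //; apply; exists q; split => [i /liftq[] //|i iln].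
split; first exact: incq.
have [_ [x [cx Ncx]]] := chainc iln.
have Tx : T x by have [+ _ _ _ _] := @primec i.+1 iln; apply.
have [_ _ trace1] := liftq i.+1 iln; have [_ _ trace0] := liftq i (leqW iln).
by exists x; split; [apply/(trace1 x Tx) | move/(trace0 x Tx)].
Qed.

End ChainLift.

Section Span.
Variables (K : fieldType) (D : K -> Prop).
Hypothesis subD : is_subring D.

Lemma span_submodule s : is_submodule D (Defs.span D s).
Proof.
split.
- exists (fun _ => 0); split; first by move=> _; exact: subring0.
  by rewrite big1 // => i _; rewrite mul0r.
- move=> _ _ [c [Dc ->]] [c' [Dc' ->]]; exists (fun i => c i + c' i); split.
    by move=> i; apply: subringD.
  by rewrite -big_split; apply: eq_bigr => i _; rewrite mulrDl.
- move=> d _ Dd [c [Dc ->]]; exists (fun i => d * c i); split.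
    by move=> i; apply: subringM.
  by rewrite mulr_sumr; apply: eq_bigr => i _; rewrite mulrA.
Qed.

Lemma span_mem s i : (i < size s)%N -> Defs.span D s s`_i.
Proof.
move=> si; exists (fun j => if j == i then 1 else 0); split.
  by move=> j; case: (j == i); [exact: subring1 | exact: subring0].
rewrite (bigD1 (Ordinal si)) //= eqxx mul1r big1 ?addr0 // => j ji.
have -> : (nat_of_ord j == i) = false.
  by apply/negbTE; apply: contra ji => /eqP eji; apply/eqP; apply: val_inj.
by rewrite mul0r.
Qed.

End Span.

Lemma span_min (K : fieldType) (D E : K -> Prop) s : is_submodule D E ->
  (forall i, (i < size s)%N -> E s`_i) -> incl (Defs.span D s) E.
Proof.
move=> [E0 ED EM] Es _ [c [Dc ->]]; apply: (big_ind E) => // i _.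
by apply: EM => //; exact: Es.
Qed.

Section FiniteIdeals.
Variables (K : fieldType) (D : K -> Prop).
Hypothesis subD : is_subring D.

Lemma span_cat s t :
  incl (Defs.span D s) (Defs.span D (s ++ t)) /\ incl (Defs.span D t) (Defs.span D (s ++ t)).
Proof.
split; apply: span_min; try exact: span_submodule.
  move=> i si; have -> : s`_i = (s ++ t)`_i by rewrite nth_cat si.
  by apply: span_mem => //; rewrite size_cat ltn_addr.
move=> i ti; have -> : t`_i = (s ++ t)`_(size s + i).
  by rewrite nth_cat ltnNge leq_addr /= addKn.
by apply: span_mem => //; rewrite size_cat ltn_add2l.
Qed.

Lemma fg_join (M G1 G2 : K -> Prop) : is_submodule D M ->
  fg_frac D G1 -> fg_frac D G2 -> incl G1 M -> incl G2 M ->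
  exists H, [/\ fg_frac D H, incl H M, incl G1 H & incl G2 H].
Proof.
move=> subM [[_ [x [G1x x0]]] [s eG1]] [_ [t eG2]] sM tM; subst G1 G2.
have [st ts] := span_cat s t.
exists (Defs.span D (s ++ t)); split => //.
- split; last by exists (s ++ t).
  by split; [exact: span_submodule | exists x; split; [exact: st | exact: x0]].
- apply: span_min => // i; rewrite size_cat nth_cat; case: ifP => si ist.
    by apply: sM; exact: span_mem.
  have si' : (size s <= i)%N by rewrite leqNgt si.
  by apply: tM; apply: span_mem => //; rewrite ltn_subLR.
Qed.

Lemma fg_single (M : K -> Prop) y : is_submodule D M -> M y -> y != 0 ->
  [/\ fg_frac D (Defs.span D [:: y]), incl (Defs.span D [:: y]) M & Defs.span D [:: y] y].
Proof.
move=> subM My y0.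
have Dy : Defs.span D [:: y] y by exact: (span_mem subD (s := [:: y]) (i := 0%N)).
split => //.
- split; last by exists [:: y].
  by split; [exact: span_submodule | exists y].
- by apply: span_min => // -[|i].
Qed.

End FiniteIdeals.

Section StarFinite.
Variables (K : fieldType) (D : K -> Prop) (star : (K -> Prop) -> (K -> Prop)).
Hypothesis subD : is_subring D.
Hypothesis starD : semistar D star.

Lemma star_submodule G : nz_submodule D G -> is_submodule D (star G).
Proof. by have [starnz _ _ _ _] := starD; move=> /starnz[]. Qed.

Lemma star_mono G H : nz_submodule D G -> nz_submodule D H -> incl G H ->
  incl (star G) (star H).
Proof. by have [_ _ + _ _] := starD; apply. Qed.

Lemma star_one G : nz_submodule D G -> incl G D -> star G 1 -> star G = star D.
Proof.
have [starnz _ _ starext staridem] := starD; move=> nzG GD G1.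
have nzD := subring_nz_submodule subD; have nzsG := starnz _ nzG.
apply/predeqP => x; split; first exact: star_mono.
have DsG : incl D (star G).
  by move=> d Dd; rewrite -[d]mulr1; have [[_ _ +] _] := nzsG; apply.
by move=> /(star_mono nzD nzsG DsG); rewrite staridem.
Qed.

Section Module.
Variable M : K -> Prop.
Hypothesis nzM : nz_submodule D M.

Lemma star_f_ext : incl M (star_f D star M).
Proof.
have [subM [x0 [Mx0 x00]]] := nzM; have [starnz _ _ starext _] := starD.
move=> x Mx; have [->|xn0] := eqVneq x 0.
  have [fgG GM _] := fg_single subD subM Mx0 x00; exists (Defs.span D [:: x0]); split => //.
  by have [+ _ _] := star_submodule fgG.1.
have [fgG GM Gx] := fg_single subD subM Mx xn0; exists (Defs.span D [:: x]); split => //.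
exact: starext fgG.1 _ Gx.
Qed.

Lemma star_f_finite s : (forall i, (i < size s)%N -> star_f D star M s`_i) ->
  exists H, [/\ fg_frac D H, incl H M & forall i, (i < size s)%N -> star H s`_i].
Proof.
have [subM [x0 [Mx0 x00]]] := nzM.
elim: s => [|x s IH] sM.
  by have [fgG GM _] := fg_single subD subM Mx0 x00; exists (Defs.span D [:: x0]); split.
have [H1 [fgH1 H1M H1s]] := IH (fun i => sM i.+1).
have [G [fgG GM Gx]] := sM 0%N isT.
have [H [fgH HM GH H1H]] := fg_join subD subM fgG fgH1 GM H1M.
exists H; split => // -[|i] si /=.
  exact: star_mono fgG.1 fgH.1 GH _ Gx.
exact: star_mono fgH1.1 fgH.1 H1H _ (H1s _ si).
Qed.

Lemma star_f_idem : incl (star_f D star (star_f D star M)) (star_f D star M).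
Proof.
have [starnz _ _ _ staridem] := starD.
move=> y [G [fgG GsM Gy]]; have [nzG [s eG]] := fgG.
have [H [fgH HM Hs]] : exists H, [/\ fg_frac D H, incl H M
    & forall i, (i < size s)%N -> star H s`_i].
  by apply: star_f_finite => i si; apply: GsM; rewrite eG; exact: span_mem.
have nzsH := starnz _ fgH.1.
have GsH : incl G (star H) by rewrite eG; apply: span_min => //; case: nzsH.
by exists H; split => //; rewrite -(staridem _ fgH.1); exact: star_mono nzG nzsH GsH _ Gy.
Qed.

Lemma star_f_submodule : is_submodule D (star_f D star M).
Proof.
have [subM _] := nzM; split.
- by have [+ _ _] := subM; move/star_f_ext.
- move=> a b [G1 [fgG1 G1M G1a]] [G2 [fgG2 G2M G2b]].
  have [H [fgH HM G1H G2H]] := fg_join subD subM fgG1 fgG2 G1M G2M.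
  exists H; split => //; have [_ + _] := star_submodule fgH.1; apply.
    exact: star_mono fgG1.1 fgH.1 G1H _ G1a.
  exact: star_mono fgG2.1 fgH.1 G2H _ G2b.
- move=> d a Dd [G [fgG GM Ga]]; exists G; split => //.
  by have [_ _ +] := star_submodule fgG.1; apply.
Qed.

End Module.
End StarFinite.

Lemma star_f_mono (K : fieldType) (D : K -> Prop) star (E E' : K -> Prop) :
  incl E E' -> incl (star_f D star E) (star_f D star E').
Proof. by move=> EE' y [G [fgG GE Gy]]; exists G; split => // x /GE /EE'. Qed.

Lemma seq_in_chain (K : fieldType) (C : set (set K)) (s : seq K) :
  (exists X, C X) -> total_on C subset ->
  (forall i, (i < size s)%N -> (\bigcup_(X in C) X) s`_i) ->
  exists2 X, C X & forall i, (i < size s)%N -> X s`_i.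
Proof.
move=> [X0 CX0] totC; elim: s => [|x s IH] sC; first by exists X0.
have [X CX Xs] := IH (fun i => sC i.+1).
have [X1 CX1 X1x] := sC 0%N isT.
case: (totC _ _ CX CX1) => XX1.
  by exists X1 => // -[|i] si //=; apply: XX1; exact: Xs.
by exists X => // -[|i] si //=; [exact: XX1 | exact: Xs].
Qed.

(* Nonzero ideals of D containing P whose star_f-closure does not contain 1;
   their maximal members are exactly the quasi-star_f-maximal ideals. *)
Definition fproper_ideal (K : fieldType) (D : K -> Prop) star (P I : K -> Prop) :=
  [/\ nz_ideal D I, incl P I & ~ star_f D star I 1].

Section QMaxExistence.
Variables (K : fieldType) (D : K -> Prop) (star : (K -> Prop) -> (K -> Prop)).
Hypothesis subD : is_subring D.
Hypothesis starD : semistar D star.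
Variable P : K -> Prop.

(* Such ideals are closed under unions of nonempty chains: a finitely generated
   G in the union lies in one member of the chain. *)
Lemma fproper_bigcup (C : set (set K)) :
  (exists X, C X) -> C `<=` fproper_ideal D star P -> total_on C subset ->
  fproper_ideal D star P (\bigcup_(X in C) X).
Proof.
move=> neC fpC totC; have [X0 CX0] := neC.
have [[[[X00 _ _] [x0 [X0x0 x00]]] _] PX0 _] := fpC _ CX0.
have two x y : (\bigcup_(X in C) X) x -> (\bigcup_(X in C) X) y ->
    exists2 X, C X & X x /\ X y.
  move=> [X CX Xx] [Y CY Yy]; case: (totC _ _ CX CY) => XY.
    by exists Y => //; split => //; exact: XY.
  by exists X => //; split => //; exact: XY.
split; [split; [split; [split|] |] | |].
- by exists X0.
- move=> x y /two /[apply] -[X CX [Xx Xy]]; exists X => //.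
  by have [[[[_ XD _] _] _] _ _] := fpC _ CX; exact: XD.
- move=> d x Dd [X CX Xx]; exists X => //.
  by have [[[[_ _ XM] _] _] _ _] := fpC _ CX; exact: XM.
- by exists x0; split => //; exists X0.
- by move=> x [X /fpC[[_ XD] _ _]]; apply: XD.
- by move=> x /PX0; exists X0.
move=> [G [fgG GC G1]]; have [nzG [s eG]] := fgG.
have [X CX Xs] : exists2 X, C X & forall i, (i < size s)%N -> X s`_i.
  by apply: seq_in_chain => // i si; apply: GC; rewrite eG; exact: span_mem.
have [[[subX _] _] _ NX1] := fpC _ CX.
by apply: NX1; exists G; split => //; rewrite eG; exact: span_min.
Qed.

Section Maximal.
Variable M : K -> Prop.
Hypothesis fpM : fproper_ideal D star P M.
Hypothesis maxM : forall X, fproper_ideal D star P X -> incl M X -> incl X M.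

(* M^{star_f} ∩ D is again such an ideal, hence equal to M by maximality. *)
Lemma maximal_fproper_quasi : forall x, star_f D star M x /\ D x <-> M x.
Proof.
have [[nzM MD] PM NM1] := fpM; have [subM [x0 [Mx0 x00]]] := nzM.
have [sM0 sMD sMM] := star_f_submodule subD starD nzM.
have MM' : incl M (fun y => star_f D star M y /\ D y).
  by move=> y My; split; [exact: star_f_ext | exact: MD].
move=> x; split; last exact: MM'.
apply: (maxM (X := fun y => star_f D star M y /\ D y)) => //.
split.
- split; last by move=> y [].
  split; last by exists x0; split => //; exact: MM'.
  split; first by split => //; exact: subring0.
  + by move=> a b [sa Da] [sb Db]; split; [exact: sMD | exact: subringD].
  + by move=> d a Dd [sa Da]; split; [exact: sMM | exact: subringM].
- by move=> y /PM /MM'.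
- have M'sM : incl (fun y => star_f D star M y /\ D y) (star_f D star M) by move=> y [].
  by move=> /(star_f_mono M'sM) /(star_f_idem subD starD nzM).
Qed.

(* A maximal such ideal is quasi-star_f-maximal: any proper quasi-ideal J ⊇ M
   has 1 outside J^{star_f}, so J = M. *)
Lemma maximal_fproper_qmax : QMax D star M.
Proof.
have [[nzM MD] PM NM1] := fpM.
have quasiM : quasi_ideal D star M by split => //; exact: maximal_fproper_quasi.
split.
  split => //; exists 1; split; first exact: subring1.
  by move/maximal_fproper_quasi => -[].
move=> J [[[nzJ JD] quasiJ] [y [Dy NJy]]] MJ.
have fpJ : fproper_ideal D star P J.
  split => //; first by move=> z /PM /MJ.
  move=> sJ1; apply: NJy; rewrite -[y]mulr1; have [[_ _ JM] _] := nzJ; apply: JM => //.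
  by apply/quasiJ; split => //; exact: subring1.
by apply/predeqP => z; split; [exact: maxM | exact: MJ].
Qed.

End Maximal.

Lemma qmax_exists : fproper_ideal D star P P -> exists M, QMax D star M /\ incl P M.
Proof.
move=> fpP; have [M [fpM maxM]] := zorn_nonempty (ex_intro _ _ fpP) fproper_bigcup.
have [_ PM _] := fpM.
by exists M; split => //; apply: maximal_fproper_qmax => // X fpX; exact: maxM.
Qed.

End QMaxExistence.

Section Linked.
Variables (K : fieldType) (D : K -> Prop) (star : (K -> Prop) -> (K -> Prop)).
Hypothesis subD : is_subring D.
Hypothesis starD : semistar D star.

Definition linked_condition (W : K -> Prop) :=
  forall F, fg_frac D F -> incl F D -> star F = star D -> prodmod F W = W.

(* If F is finitely generated, F ⊆ D and F^star = D^star, then 1 ∈ F^{~star}: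
   F is contained in no quasi-star_f-maximal ideal. *)
Lemma tilde_one F : fg_frac D F -> incl F D -> star F = star D -> tilde D star F 1.
Proof.
have [_ _ _ starext _] := starD.
move=> fgF FD sFD M [[[[nzM MD] quasiM] [x [Dx NMx]]] _].
have [[f Ff NMf]|noF] := pselect (exists2 f, F f & ~ M f).
  have f0 : f != 0 by apply/eqP => f0; apply: NMf; rewrite f0; case: nzM => -[].
  by exists f, f; split => //; [exact: FD | rewrite mulfV].
have FM : incl F M by move=> z Fz; apply: contrapT => NMz; apply: noF; exists z.
have M1 : M 1.
  apply/quasiM; split; last exact: subring1.
  exists F; split => //; rewrite sFD.
  by apply: starext; [exact: subring_nz_submodule | exact: subring1].
by case: NMx; rewrite -[x]mulr1; have [[_ _ +] _] := nzM; apply.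
Qed.

Lemma tilde_valuation_linked V : tilde_valuation_overring D star V -> linked_overring D star V.
Proof.
move=> [[[subV DV] _] tildeV]; split => // F fgF FD sFD.
apply: prodmod_one => //; first by move=> z /FD /DV.
exact: tildeV (tilde_one fgF FD sFD).
Qed.

Section CentreOfValuation.
Hypothesis quotD : is_quotient_field_of D.
Variable W : K -> Prop.
Hypothesis valW : is_valuation_ring W.
Hypothesis DW : incl D W.
Hypothesis linkedW : linked_condition W.

Lemma centre_fproper x : ~ W x ->
  fproper_ideal D star (fun d => D d /\ vmax W d) (fun d => D d /\ vmax W d).
Proof.
move=> NWx; have subW := valW.1; split => //; last first.
  move=> [G [fgG GP G1]]; have GD : incl G D by move=> z /GP[].
  have GW1 : prodmod G W 1.
    by rewrite (linkedW fgG GD (star_one subD starD fgG.1 GD G1)); exact: subring1.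
  apply: (vmax_neq1 subW); move: GW1; apply: prodmod_ind; [exact: vmax0 | exact: vmaxD |].
  by move=> a b /GP[_ ma] Wb; exact: vmaxMr.
split; last by move=> z [].
split.
  split; first by split; [exact: subring0 | exact: vmax0].
  + by move=> a b [Da ma] [Db mb]; split; [exact: subringD | exact: vmaxD].
  + by move=> d a Dd [Da ma]; split; [exact: subringM | apply: vmaxM => //; exact: DW].
have x0 : x != 0 by apply/eqP => x0; apply: NWx; rewrite x0; exact: subring0.
have [a [b [Da Db b0 ex]]] := quotD x.
have a0 : a != 0 by apply: contra_neq x0 => a0; rewrite ex a0 mul0r.
exists b; split => //; split => //.
have -> : b = a * x^-1 by rewrite ex invfM invrK mulVKf.
by apply: vmaxM => //; [exact: DW | exact: vmax_inv].
Qed.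

Lemma linked_valuation_tilde F : fg_frac D F -> incl (tilde D star F) (prodmod F W).
Proof.
move=> fgF; have [_ [f0 [Ff0 f00]]] := fgF.1.
have [WK|/existsNP[x NWx]] := pselect (forall x, W x).
  move=> y _; rewrite -[y](mulrK (x := f0)) ?unitfE // [y * _]mulrC -mulrA.
  exact: prodmod_gen.
have [M [qmaxM PM]] := qmax_exists subD starD (centre_fproper NWx).
move=> y /(_ M qmaxM) [e [s [Fe Ds NMs ->]]].
have [s0 Ws'] := vmax_unit (DW Ds) (fun ms => NMs (PM s (conj Ds ms))).
exact: prodmod_gen.
Qed.

End CentreOfValuation.

Lemma valuation_over_linked_tilde T W : is_quotient_field_of D ->
  linked_overring D star T -> is_valuation_ring W -> incl T W ->
  tilde_valuation_overring D star W.
Proof.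
move=> quotD [[subT DT] linkedT] valW TW; have DW : incl D W by move=> z /DT /TW.
have linkedW : linked_condition W.
  move=> F fgF FD sFD; apply: prodmod_one; [exact: valW.1 | by move=> z /FD /DW |].
  have : prodmod F T 1 by rewrite (linkedT F fgF FD sFD); exact: subring1.
  exact: prodmod_mono.
split; first by split; [split; [exact: valW.1 | exact: DW] | exact: valW.2].
by move=> F fgF; exact: linked_valuation_tilde.
Qed.

End Linked.

Theorem lemma4p1 (K : fieldType) (D : K -> Prop)
  (star : (K -> Prop) -> (K -> Prop)) (n : nat) :
  is_subring D -> is_quotient_field_of D -> semistar D star ->
  ((forall T, linked_overring D star T -> krull_dim_le T n) <->
   (forall V, tilde_valuation_overring D star V -> krull_dim_le V n)).
Proof.
move=> subD quotD starD; split.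
  by move=> dimT V /(tilde_valuation_linked subD starD) /dimT.
move=> dimV T linkedT [c [primec chainc]]; have [[subT _] _] := linkedT.
have [W [valW TW NdimW]] := prime_chain_lift subT primec chainc.
by apply: NdimW; apply: dimV; exact: valuation_over_linked_tilde quotD linkedT valW TW.
Qed.
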